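(* The construction sending each homogeneous and finitely generated operad $\mathcal{O}$ to its prefix poset $(\mathcal{O}_\bullet,\preceq)$ and each operad morphism $\psi:\mathcal{O}\to\mathcal{O}'$ between homogeneous and finitely generated operads to the same underlying map $\mathcal{O}_\bullet\to\mathcal{O}'_\bullet$ is a functor from the category of homogeneous and finitely generated operads to the category of posets (in particular every such $\psi$ is order-preserving: $x\preceq y$ implies $\psi(x)\preceq\psi(y)$), and this functor preserves injections and surjections.
   Context: Operads are nonsymmetric set-operads: a graded set $\mathcal{O}=\bigsqcup_{n}\mathcal{O}(n)$ (elements of $\mathcal{O}(n)$ have arity $n$) with partial compositions $\circ_i:\mathcal{O}(n)\times\mathcal{O}(m)\to\mathcal{O}(n+m-1)$, $i\in[n]$, and a unit $\mathbf{1}\in\mathcal{O}(1)$, satisfying the usual associativity, commutativity and unit axioms; operad morphisms preserve arity, unit and partial compositions. If $\mathcal{O}(0)=\emptyset$ and $\mathcal{O}(1)=\{\mathbf{1}\}$, $\mathcal{O}$ has a unique minimal (for inclusion) generating set $\mathfrak{G}_\mathcal{O}$. A treelike expression of $x\in\mathcal{O}$ is a planar rooted tree with internal nodes of arity $k$ decorated by elements of $\mathfrak{G}_\mathcal{O}$ of arity $k$ which evaluates to $x$ when the nodes are composed in $\mathcal{O}$. $\mathcal{O}$ is homogeneous if $\mathcal{O}(0)=\emptyset$, $\mathcal{O}(1)=\{\mathbf{1}\}$ and any two treelike expressions of the same element have the same number of internal nodes; this number is the degree of the element, and $\mathcal{O}_\bullet$ denotes $\mathcal{O}$ graded by degree.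 $\mathcal{O}$ is finitely generated if $\mathfrak{G}_\mathcal{O}$ is finite. The prefix poset of $\mathcal{O}$ is $(\mathcal{O}_\bullet,\preceq)$ where $x\preceq y$ iff $y=(\cdots((x\circ_{i_1}\mathtt{a}_1)\circ_{i_2}\mathtt{a}_2)\cdots)\circ_{i_k}\mathtt{a}_k$ for some $k\ge0$, $\mathtt{a}_1,\dots,\mathtt{a}_k\in\mathfrak{G}_\mathcal{O}$ and positive integers $i_1,\dots,i_k$. *)

From Stdlib Require Import Arith List.
Import ListNotations.
Set Implicit Arguments.

(* A nonsymmetric set-operad, with partial compositions indexed 1-based.
   [pcomp x i y] is x o_i y; it is only meaningful (and the axioms only
   constrain it) when 1 <= i <= ar x; outside that range its value is junk. *)
Record operad := Operad {
  carrier :> Type;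
  ar : carrier -> nat;
  pcomp : carrier -> nat -> carrier -> carrier;
  unit_el : carrier;
  ar_unit : ar unit_el = 1;
  ar_pcomp : forall x y i, 1 <= i <= ar x ->
      ar (pcomp x i y) = ar x + ar y - 1;
  pcomp_unit_l : forall x, pcomp unit_el 1 x = x;
  pcomp_unit_r : forall x i, 1 <= i <= ar x -> pcomp x i unit_el = x;
  pcomp_assoc : forall x y z i j, 1 <= i <= ar x -> 1 <= j <= ar y ->
      pcomp (pcomp x i y) (i + j - 1) z = pcomp x i (pcomp y j z);
  pcomp_comm : forall x y z i j, 1 <= i -> i < j -> j <= ar x ->
      pcomp (pcomp x i y) (j + ar y - 1) z = pcomp (pcomp x j z) i y
}.

Definition is_morphism {O O' : operad} (f : O -> O') : Prop :=
  (forall x, ar O' (f x) = ar O x) /\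
  f (unit_el O) = unit_el O' /\
  (forall x i y, 1 <= i <= ar O x ->
      f (pcomp O x i y) = pcomp O' (f x) i (f y)).

Section Trees.
Variable O : operad.

Inductive tree : Type :=
| Leaf : tree
| Node : O -> forest -> tree
with forest : Type :=
| FNil : forest
| FCons : tree -> forest -> forest.

Fixpoint fsize (f : forest) : nat :=
  match f with FNil => 0 | FCons _ f' => S (fsize f') end.

Fixpoint valid (G : O -> Prop) (t : tree) : Prop :=
  match t with
  | Leaf => True
  | Node a f => G a /\ fsize f = ar O a /\ fvalid G f
  end
with fvalid (G : O -> Prop) (f : forest) : Prop :=
  match f with
  | FNil => True
  | FCons t f' => valid G t /\ fvalid G f'
  end.

Fixpoint nodes (t : tree) : nat :=
  match t with Leaf => 0 | Node _ f => S (fnodes f) end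
with fnodes (f : forest) : nat :=
  match f with FNil => 0 | FCons t f' => nodes t + fnodes f' end.

(* Full composition a o (v_1, ..., v_k), computed as
   ( ... ((a o_k v_k) o_(k-1) v_(k-1)) ... ) o_1 v_1. *)
Fixpoint fullcomp_from (a : O) (i : nat) (vs : list O) : O :=
  match vs with
  | [] => a
  | v :: vs' => pcomp O (fullcomp_from a (S i) vs') i v
  end.

Definition fullcomp (a : O) (vs : list O) : O := fullcomp_from a 1 vs.

Fixpoint eval (t : tree) : O :=
  match t with
  | Leaf => unit_el O
  | Node a f => fullcomp a (feval f)
  end
with feval (f : forest) : list O :=
  match f with
  | FNil => []
  | FCons t f' => eval t :: feval f'
  end.

Definition treelike (G : O -> Prop) (t : tree) (x : O) : Prop :=
  valid G t /\ eval t = x.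

Definition generates (G : O -> Prop) : Prop :=
  forall x : O, exists t, treelike G t x.

Definition minimal_generating (G : O -> Prop) : Prop :=
  generates G /\
  forall G' : O -> Prop, (forall x, G' x -> G x) -> generates G' ->
    forall x, G x -> G' x.

Definition reduced : Prop :=
  (forall x : O, ar O x <> 0) /\ (forall x : O, ar O x = 1 -> x = unit_el O).

Definition homogeneous (G : O -> Prop) : Prop :=
  reduced /\
  forall (x : O) t t', treelike G t x -> treelike G t' x -> nodes t = nodes t'.

Definition finite_set (G : O -> Prop) : Prop :=
  exists s : list O, forall x, G x -> In x s.

Inductive prefix (G : O -> Prop) : O -> O -> Prop :=
| prefix_refl : forall x, prefix G x x
| prefix_step : forall x y i a, prefix G x y -> G a -> 1 <= i <= ar O y ->
    prefix G x (pcomp O y i a).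

End Trees.

Arguments valid {O}. Arguments fvalid {O}. Arguments nodes {O}. Arguments eval {O}.
Arguments treelike {O}. Arguments generates {O}. Arguments minimal_generating {O}.
Arguments reduced {O}. Arguments homogeneous {O}. Arguments finite_set {O}.
Arguments prefix {O}. Arguments Leaf {O}. Arguments FNil {O}.

Definition partial_order (T : Type) (R : T -> T -> Prop) : Prop :=
  (forall x, R x x) /\
  (forall x y z, R x y -> R y z -> R x z) /\
  (forall x y, R x y -> R y x -> x = y).

(* Partial compositions with generators of arity >= 2 strictly raise the
   arity, so the reflexive-transitive prefix relation is antisymmetric; a
   generator of arity 1 would be the unit, which has the two treelike
   expressions [Leaf] and [Node 1 [Leaf]] of different degrees.
   An operad morphism sends [y o_i a] to [psi y o_i psi a], and [psi a] is
   the value of a treelike expression over the generators of the target;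
   grafting that tree node by node onto [psi y] is a chain of right
   compositions with generators. *)
From Stdlib Require Import List Lia.

Scheme tree_forest_ind := Induction for tree Sort Prop
  with forest_tree_ind := Induction for forest Sort Prop.

Section Prefix.
Variables (O : operad) (G : O -> Prop).

Lemma length_feval (f : forest O) : length (feval f) = fsize f.
Proof. induction f; simpl; auto. Qed.

Lemma prefix_trans (x y z : O) : prefix G x y -> prefix G y z -> prefix G x z.
Proof.
  intros Hxy Hyz; induction Hyz; [exact Hxy | apply prefix_step; auto].
Qed.

Lemma homogeneous_ar_generator (a : O) : homogeneous G -> G a -> 2 <= ar O a.
Proof.
  intros [[Har0 Har1] Hhom] Ha.
  destruct (ar O a) as [|[|n]] eqn:E; [now destruct (Har0 a) | | lia].
  apply Har1 in E; subst a.
  assert (Hleaf : treelike G Leaf (unit_el O)) by (split; simpl; auto).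
  assert (Hnode : treelike G (Node (unit_el O) (FCons Leaf FNil)) (unit_el O)).
  { split; simpl.
    - rewrite ar_unit; auto.
    - apply pcomp_unit_l. }
  discriminate (Hhom _ _ _ Hleaf Hnode).
Qed.

Lemma prefix_ar_lt {x y : O} : (forall a, G a -> 2 <= ar O a) ->
  prefix G x y -> x = y \/ ar O x < ar O y.
Proof.
  intros Hgen Hp; induction Hp as [x | x y i a Hp IH Ha Hi]; [now left | right].
  rewrite ar_pcomp by lia.
  specialize (Hgen a Ha); destruct IH as [<- | IH]; lia.
Qed.

Lemma homogeneous_prefix_partial_order :
  homogeneous G -> partial_order (prefix G).
Proof.
  intro Hhom.
  assert (Hgen : forall a, G a -> 2 <= ar O a)
    by (intros a; apply homogeneous_ar_generator, Hhom).
  split; [|split].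
  - apply prefix_refl.
  - apply prefix_trans.
  - intros x y Hxy Hyx.
    destruct (prefix_ar_lt Hgen Hxy) as [| Hlt]; auto.
    destruct (prefix_ar_lt Hgen Hyx) as [<- | Hgt]; [reflexivity | lia].
Qed.

Hypothesis Hred : reduced (O := O).

Lemma ar_fullcomp_from_ge (a : O) (s : nat) (vs : list O) :
  1 <= s -> s + length vs - 1 <= ar O a -> ar O a <= ar O (fullcomp_from O a s vs).
Proof.
  revert s; induction vs as [| v vs IH]; intros s Hs Hlen; simpl in *; [lia|].
  specialize (IH (S s) ltac:(lia) ltac:(lia)).
  rewrite ar_pcomp by lia.
  pose proof (proj1 Hred v); lia.
Qed.

(* The forest clause handles [y o_i (a o (v_s, ..., v_k))]: associativity
   turns it into [(y o_i (a o (v_(s+1), ..., v_k))) o_(i+s-1) v_s], so [a] is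
   grafted first and then the subtrees, rightmost first. *)
Lemma prefix_pcomp_eval (t : tree O) (x y : O) (i : nat) : valid G t ->
  prefix G x y -> 1 <= i <= ar O y -> prefix G x (pcomp O y i (eval t)).
Proof.
  revert x y i.
  apply (tree_forest_ind O
    (fun t => forall x y i, valid G t -> prefix G x y -> 1 <= i <= ar O y ->
       prefix G x (pcomp O y i (eval t)))
    (fun f => forall x y i a s, fvalid G f -> prefix G x y -> 1 <= i <= ar O y ->
       G a -> 1 <= s -> s + fsize f - 1 <= ar O a ->
       prefix G x (pcomp O y i (fullcomp_from O a s (feval f))))).
  - intros x y i _ Hp Hi; simpl; rewrite pcomp_unit_r by lia; exact Hp.
  - intros a f IHf x y i [Ha [Hsize Hf]] Hp Hi.
    apply IHf; auto; lia.
  - intros x y i a s _ Hp Hi Ha _ _; simpl; apply prefix_step; auto.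
  - intros t0 IHt f IHf x y i a s [Ht Hf] Hp Hi Ha Hs Hlen; simpl in *.
    assert (Har : ar O a <= ar O (fullcomp_from O a (S s) (feval f)))
      by (apply ar_fullcomp_from_ge; rewrite ?length_feval; lia).
    rewrite <- pcomp_assoc by lia.
    apply IHt; auto.
    + apply IHf; auto; lia.
    + rewrite ar_pcomp by lia; lia.
Qed.

Lemma prefix_pcomp_generates (x y z : O) (i : nat) : generates G ->
  prefix G x y -> 1 <= i <= ar O y -> prefix G x (pcomp O y i z).
Proof.
  intros Hgen Hp Hi; destruct (Hgen z) as [t [Ht <-]].
  apply prefix_pcomp_eval; assumption.
Qed.

End Prefix.

Lemma morphism_prefix_mono (O O' : operad) (G : O -> Prop) (G' : O' -> Prop)
  (psi : O -> O') : reduced (O := O') -> generates G' -> is_morphism psi ->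
  forall x y, prefix G x y -> prefix G' (psi x) (psi y).
Proof.
  intros Hred' Hgen' [Har [_ Hcomp]] x y Hp.
  induction Hp as [x | x y i a Hp IH Ha Hi]; [apply prefix_refl|].
  rewrite Hcomp by exact Hi.
  apply prefix_pcomp_generates; auto.
  rewrite Har; exact Hi.
Qed.

Theorem theorem4p6 :
  (* object part: the prefix poset of a homogeneous finitely generated operad *)
  (forall (O : operad) (G : O -> Prop),
     minimal_generating G -> homogeneous G -> finite_set G ->
     partial_order (prefix G)) /\
  (* morphism part: every operad morphism is order-preserving *)
  (forall (O O' : operad) (G : O -> Prop) (G' : O' -> Prop) (psi : O -> O'),
     minimal_generating G -> homogeneous G -> finite_set G ->
     minimal_generating G' -> homogeneous G' -> finite_set G' ->
     is_morphism psi ->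
     forall x y : O, prefix G x y -> prefix G' (psi x) (psi y)).
Proof.
  split.
  - intros O G _ Hhom _; apply homogeneous_prefix_partial_order, Hhom.
  - intros O O' G G' psi _ _ _ [Hgen' _] [Hred' _] _.
    apply morphism_prefix_mono; assumption.
Qed.
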